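(* Let $N\in\mathbb{N}$ be composite and $p$ a prime factor of $N$ with $p\le b$ for some $b\le N/5$. Let $r,m\in\mathbb{N}$ with $2\le m<p$, $\gcd(N,m)=1$ and $r=p\bmod m$, and put $d=\lceil (b/m)^{1/2}\rceil$. Then the sets \[\{m^{-1}r-n\bmod N:1\le n\le d\}\quad\text{and}\quad\{-dn\bmod N:1\le n\le d\}\] (with $m^{-1}$ the inverse of $m$ modulo $N$) are disjoint subsets of $\{0,\dots,N-1\}$, and there exist $i,j\in\{1,\dots,d\}$ such that $m^{-1}r-j\equiv -di\pmod p$; that is, they form a solution to the Covering Problem for $N$ and $d$.
   Context: Covering Problem: for $N$ and $d$, a solution is a pair of disjoint subsets $\{b_n:1\le n\le d\}$ and $\{s_n:1\le n\le d\}$ of $\{0,\dots,N-1\}$ such that, if $N$ is composite, there exist $i,j\in\{1,\dots,d\}$ and a prime factor $p$ of $N$ with $b_i\equiv s_j\pmod p$. *)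

From mathcomp Require Import all_boot all_order all_algebra.
From mathcomp Require Import reals Rstruct.
From Stdlib Require Rdefinitions.
Set Implicit Arguments. Unset Strict Implicit. Unset Printing Implicit Defensive.
Import Order.TTheory GRing.Theory Num.Theory.

Definition ceil_sqrt_ratio (b m : nat) : nat :=
  `| Num.ceil (Num.sqrt ((b%:R / m%:R)%R : Rdefinitions.R)) |%N.

From mathcomp Require Import all_boot all_order all_algebra.
From mathcomp Require Import reals Rstruct.
From Stdlib Require Rdefinitions.
From mathcomp Require Import ring zify.
Set Implicit Arguments. Unset Strict Implicit. Unset Printing Implicit Defensive.
Import Order.TTheory GRing.Theory Num.Theory.

(* Multiplying by m turns a congruence m^-1 r - n1 = -d n2 (mod N) into
   N | r - m n1 + m d n2.  The choice of d gives m d^2 >= b and m (d-1)^2 < b,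
   so this integer lies strictly between 0 and 5b <= N, and no collision exists.
   For the covering, write p = q m + r with 0 < r; then q < d^2, so q = d i - j
   with 1 <= i, j <= d, and r - m j + m d i = p.  Hence m (m^-1 r - j + d i) is
   divisible by p, and so is m^-1 r - j + d i since p does not divide m. *)

Section CeilSqrtRatio.

Local Open Scope ring_scope.

Variables b m : nat.
Hypothesis m_gt0 : (0 < m)%N.

Let s : Rdefinitions.R := Num.sqrt (b%:R / m%:R).

Lemma ceil_sqrt_ratioE : (ceil_sqrt_ratio b m)%:Z = Num.ceil s.
Proof.
rewrite /ceil_sqrt_ratio abszE ger0_norm // ceil_ge0.
by rewrite (lt_le_trans _ (sqrtr_ge0 _)) // ltrN10.
Qed.

Lemma natr_ratio_sqrt : b%:R = m%:R * s ^+ 2.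
Proof.
rewrite sqr_sqrtr ?divr_ge0 // mulrC divfK //.
by rewrite pnatr_eq0 -lt0n.
Qed.

Lemma ceil_sqrt_ratio_sq_ge : (b <= m * ceil_sqrt_ratio b m ^ 2)%N.
Proof.
rewrite -(ler_nat Rdefinitions.R) natrM natrX natr_ratio_sqrt.
rewrite ler_pM2l ?ltr0n // lerXn2r ?nnegrE ?sqrtr_ge0 //.
by rewrite -[_%:R]/((ceil_sqrt_ratio b m)%:Z%:~R) ceil_sqrt_ratioE ceil_ge.
Qed.

Lemma ceil_sqrt_ratio_pred_sq_lt : (0 < b)%N ->
  (m * (ceil_sqrt_ratio b m).-1 ^ 2 < b)%N.
Proof.
move=> b_gt0; rewrite -(ltr_nat Rdefinitions.R) natrM natrX natr_ratio_sqrt.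
rewrite ltr_pM2l ?ltr0n // ltrXn2r ?nnegrE ?sqrtr_ge0 //.
have := ceilB1_lt s; rewrite -ceil_sqrt_ratioE.
case: (ceil_sqrt_ratio b m) => [|d] /=; first by rewrite sqrtr_gt0 divr_gt0 ?ltr0n.
by rewrite -addn1 PoszD addrK.
Qed.

End CeilSqrtRatio.

Lemma modn_prime_gt0 p m : prime p -> 1 < m < p -> 0 < p %% m.
Proof.
move=> p_pr /andP[m_gt1 m_lt_p]; rewrite lt0n.
apply/negP => /(prime_nt_dvdP p_pr) m_eq_p; move: m_lt_p.
by rewrite m_eq_p ?ltnn // neq_ltn m_gt1 orbT.
Qed.

Lemma sq_le_3sq_pred d : d ^ 2 <= 3 * d.-1 ^ 2 + 1.
Proof. by case: d => [|d] //=; nia. Qed.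

Lemma mul_sq_lt4 b m d : m < b -> m * d.-1 ^ 2 < b -> m * d ^ 2 < 4 * b.
Proof.
move=> m_lt lt_b; have := leq_mul (leqnn m) (sq_le_3sq_pred d).
rewrite mulnDr muln1 mulnCA; lia.
Qed.

Lemma lt_sq_decomp d q : q < d * d ->
  exists i j, [/\ 0 < i <= d, 0 < j <= d & d * i = j + q].
Proof.
move=> q_lt; have d_gt0 : 0 < d by case: d q_lt => //; rewrite muln0.
exists (q %/ d).+1, (d - q %% d); split.
- by rewrite ltn_divLR.
- by rewrite subn_gt0 ltn_mod d_gt0 leq_subr.
- rewrite {3}(divn_eq q d); have := ltn_mod q d; rewrite d_gt0.
  move: (q %/ d) (q %% d) => a c c_lt.
  by rewrite mulnS addnCA subnK 1?ltnW // addnC mulnC.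
Qed.

Local Open Scope ring_scope.

Lemma residue_gap_bounds (b m d r n1 n2 : nat) :
  (0 < r < m)%N -> (m < b)%N -> (m * d.-1 ^ 2 < b)%N ->
  (0 < n1 <= d)%N -> (0 < n2 <= d)%N ->
  0 < r%:Z - m%:Z * (n1%:Z - d%:Z * n2%:Z) < (5 * b)%N%:Z.
Proof.
move=> r_bd m_lt lt_b n1_bd n2_bd.
have := mul_sq_lt4 (d := d) m_lt lt_b.
have : (m * n1 <= m * (d * n2) <= m * (d * d))%N by rewrite !leq_mul2l; nia.
rewrite !PoszM; lia.
Qed.

Lemma not_dvdz_between (N v : int) : 0 < v < N -> ~~ (N %| v)%Z.
Proof.
case: v => // v /andP[v_gt0 v_lt]; rewrite dvdzE /=.
apply: contraTN v_lt => /(dvdn_leq v_gt0) N_le; rewrite -leNgt.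
by rewrite (le_trans (ler_norm N)) // -abszE lez_nat.
Qed.

Section ModularInverse.

Variables (N m minv : int).
Hypothesis minvP : (m * minv == 1 %[mod N])%Z.

Lemma dvdz_mul_inv_sub (r a : int) : (N %| m * (minv * r - a) - (r - m * a))%Z.
Proof.
move: minvP; rewrite eqz_mod_dvd => /(dvdz_mulr r).
by congr (_ %| _)%Z; ring.
Qed.

Lemma eqz_mod_mul_inv_dvd (r x y : int) :
  (minv * r - x == y %[mod N])%Z -> (N %| r - m * (x + y))%Z.
Proof.
rewrite eqz_mod_dvd -addrA -opprD => /(dvdz_mull m) dvd_mY.
by rewrite -(rpredBl _ dvd_mY) dvdz_mul_inv_sub.
Qed.

Lemma dvdz_eqz_mod_mul_inv (p r x y : int) : (p %| N)%Z -> coprimez p m ->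
  (p %| r - m * (x + y))%Z -> (minv * r - x == y %[mod p])%Z.
Proof.
move=> p_dvd_N p_m dvd_r; rewrite eqz_mod_dvd -addrA -opprD.
rewrite -(Gauss_dvdzr _ p_m) -(rpredBr _ dvd_r).
exact: dvdz_trans p_dvd_N (dvdz_mul_inv_sub _ _).
Qed.

End ModularInverse.

Local Close Scope ring_scope.

Theorem corollary4p4 (N p b r m : nat) (minv : int) :
  1 < N -> ~~ prime N ->
  prime p -> p %| N -> p <= b -> 5 * b <= N ->
  2 <= m -> m < p -> coprime N m -> r = p %% m ->
  ((m%:Z * minv)%R == 1 %[mod N%:Z])%Z ->
  let d := ceil_sqrt_ratio b m in
  (forall n1 n2 : nat, 1 <= n1 <= d -> 1 <= n2 <= d ->
     (((minv * r%:Z - n1%:Z) %% N%:Z)%Z != ((- (d%:Z * n2%:Z)) %% N%:Z)%Z)%R)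
  /\ (exists i j : nat, [/\ 1 <= i <= d, 1 <= j <= d &
       ((minv * r%:Z - j%:Z)%R == (- (d%:Z * i%:Z))%R %[mod p%:Z])%Z]).
Proof.
(* 1 < N, ~~ prime N and coprime N m only guarantee that such data exist. *)
move=> _ _ p_pr p_dvd_N p_le_b b5_le_N m_ge2 m_lt_p _ rE minvP d.
have m_gt0 : 0 < m by apply: ltnW.
have m_lt_b : m < b by apply: leq_trans p_le_b.
have r_bd : 0 < r < m by rewrite rE modn_prime_gt0 ?m_ge2 // ltn_mod.
have d_sq_ge : b <= m * d ^ 2 by apply: ceil_sqrt_ratio_sq_ge.
have d_pred_lt : m * d.-1 ^ 2 < b.
  by rewrite ceil_sqrt_ratio_pred_sq_lt // (ltn_trans m_gt0).
split=> [n1 n2 n1_bd n2_bd | ].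
  apply/negP => /(eqz_mod_mul_inv_dvd minvP); apply/negP/not_dvdz_between.
  have /andP[-> v_lt] := residue_gap_bounds r_bd m_lt_b d_pred_lt n1_bd n2_bd.
  by rewrite (lt_le_trans v_lt) ?lez_nat.
have [q pE] : exists q, p = q * m + r by exists (p %/ m); rewrite rE -divn_eq.
have q_lt : q < d * d.
  rewrite -(ltn_pmul2r m_gt0) mulnn [_ ^ 2 * _]mulnC.
  apply: leq_trans d_sq_ge; apply: leq_trans p_le_b.
  by rewrite pE -addn1 leq_add2l; case/andP: r_bd.
have [i [j [i_bd j_bd dijE]]] := lt_sq_decomp q_lt.
exists i, j; split=> //.
apply: (dvdz_eqz_mod_mul_inv minvP); first by rewrite dvdzE.
  by rewrite coprimezE /= prime_coprime // gtnNdvd.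
suff -> : (r%:Z - m%:Z * (j%:Z - d%:Z * i%:Z))%R = p by [].
by rewrite -PoszM dijE pE !PoszD !PoszM; ring.
Qed.
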